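(* Let $G$ be a finite group and $H \le G$ a subgroup. For $h\in H$ write $(h)_H$, $(h)_G$ for the conjugacy classes of $h$ in $H$ and in $G$, and $(h)_H^{\pm}=(h)_H\cup(h^{-1})_H$, $(h)_G^{\pm}=(h)_G\cup(h^{-1})_G$. Then: (1) The induction homomorphism $\operatorname{Ind}_H^G:\operatorname{R}(H)\to\operatorname{R}(G)$ is a monomorphism if and only if $(h)_G\cap H=(h)_H$ for every $h\in H$. (2) The induction homomorphism $\operatorname{Ind}_H^G:\operatorname{RO}(H)\to\operatorname{RO}(G)$ is a monomorphism if and only if $(h)_G^{\pm}\cap H=(h)_H^{\pm}$ for every $h\in H$.
   Context: All groups are finite. $\operatorname{R}(K)$ denotes the complex representation group of $K$ (Grothendieck group of finite-dimensional $\mathbb{C}K$-modules under direct sum) and $\operatorname{RO}(K)$ the real representation group (same for $\mathbb{R}K$-modules), regarded as a subgroup of $\operatorname{R}(K)$ via complexification; $\operatorname{Ind}_H^G$ is induction of representations. The set $(g)^{\pm}=(g)\cup(g^{-1})$ is called the real conjugacy class of $g$. *)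

From HB Require Import structures.
From mathcomp Require Import all_boot all_order all_algebra all_fingroup all_solvable all_field all_character vcharacter mxrepresentation.
Set Implicit Arguments. Unset Strict Implicit. Unset Printing Implicit Defensive.
Import GRing.Theory Num.Theory.
Local Open Scope ring_scope.

(* R(K): the Grothendieck group of complex representations, identified with
   the group of virtual characters Z[irr K] inside 'CF(K). *)
Definition Rgrp (gT : finGroupType) (K : {group gT}) : pred 'CF(K) :=
  fun phi => phi \in ('Z[irr K])%g.

(* Characters of real representations: characters afforded by a matrix
   representation all of whose matrices have real entries (i.e. entries in
   the real closed field of real algebraic numbers, algC :&: R). *)
Definition real_repr_char (gT : finGroupType) (K : {group gT}) (chi : 'CF(K)) : Prop :=
  exists n (rK : mx_representation algC K n),
    (forall x, x \in K -> forall i j, rK x i j \is Num.real) /\ chi = cfRepr rK.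

(* RO(K): the real representation group, as a subgroup of R(K) via
   complexification: differences of characters of real representations. *)
Definition ROgrp (gT : finGroupType) (K : {group gT}) (phi : 'CF(K)) : Prop :=
  exists chi1 chi2, [/\ real_repr_char chi1, real_repr_char chi2 & phi = chi1 - chi2].

From HB Require Import structures.
From mathcomp Require Import all_boot all_order all_algebra all_fingroup all_solvable all_field all_character vcharacter mxrepresentation.
From mathcomp Require Import ring.
Set Implicit Arguments. Unset Strict Implicit. Unset Printing Implicit Defensive.
Import Order.TTheory GRing.Theory Num.Theory.
Local Open Scope ring_scope.

(* If h^G :&: H = h^H for every h in H, then every class function phi of H
   satisfies Ind phi (h) = c_h * phi h with c_h = #|{x in G | h^x in H}| / #|H| > 0,
   so induction is injective; for RO the same holds because real characters are
   constant on real classes.  Conversely, if k in h^G :&: H lies outside h^H, the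
   indicators of h^H and k^H both induce to multiples of the indicator of h^G, so
   some f = b 1_(h^H) - a 1_(k^H) with b > 0 lies in the kernel of induction.
   Induction maps Z[irr H] into Z[irr G], hence has a rational matrix, and its
   complex kernel then contains a nonzero virtual character.  For RO, when k also
   avoids (h^-1)^H, replace f by f + f o inv = \sum_chi '[f, chi] (chi + chi^*%CF),
   still nonzero at h; each chi + chi^* is afforded by the realification of a
   representation affording chi. *)

Section InductionAndFusion.
Variables (gT : finGroupType) (G H : {group gT}).
Hypothesis sHG : H \subset G.

Lemma weighted_count_gt0 (F : gT -> nat) : (0 < F 1%g)%N ->
  0 < #|H|%:R^-1 * \sum_(x in G) (F x)%:R :> algC.
Proof.
move=> F1; rewrite mulr_gt0 ?invr_gt0 ?ltr0n ?cardG_gt0 // (bigD1 1%g) //=.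
by rewrite ltr_wpDr ?sumr_ge0 ?ltr0n // => x _; apply: ler0n.
Qed.

Definition fusion_ratio (h : gT) : algC :=
  #|H|%:R^-1 * \sum_(x in G) ((h ^ x)%g \in H)%:R.

Lemma fusion_ratio_gt0 h : h \in H -> 0 < fusion_ratio h.
Proof. by move=> hH; apply: weighted_count_gt0; rewrite conjg1 hH. Qed.

Lemma cfInd_fusion_invariant (phi : 'CF(H)) h :
  (forall x, x \in G -> (h ^ x)%g \in H -> phi (h ^ x)%g = phi h) ->
  'Ind[G, H] phi h = fusion_ratio h * phi h.
Proof.
move=> phiJ; rewrite cfIndE // -mulrA mulr_suml; congr (_ * _).
apply: eq_bigr => x Gx; have [hxH | hxH] := boolP ((h ^ x)%g \in H).
  by rewrite phiJ // mul1r.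
by rewrite cfun0 // mul0r.
Qed.

Lemma cfInd_inj_fusion_invariant (P : 'CF(H) -> Prop) :
    (forall phi h x, P phi -> h \in H -> x \in G -> (h ^ x)%g \in H ->
       phi (h ^ x)%g = phi h) ->
  forall phi psi, P phi -> P psi -> 'Ind[G, H] phi = 'Ind[G, H] psi -> phi = psi.
Proof.
move=> invP phi psi Pphi Ppsi /cfunP IndE; apply/cfunP => h.
have [hH | hH] := boolP (h \in H); last by rewrite !cfun0.
apply: (mulfI (lt0r_neq0 (fusion_ratio_gt0 hH))).
by rewrite -!cfInd_fusion_invariant // => x; [apply: invP Ppsi hH | apply: invP Pphi hH].
Qed.

Lemma cfInd_on_class (u : 'CF(H)) h : h \in G -> u \in 'CF(H, h ^: G) ->
  'Ind[G, H] u = 'Ind[G, H] u h *: '1_(h ^: G)%g.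
Proof.
move=> hG /cfun_onP u_on; apply/cfunP => g; rewrite cfunE cfun_classE hG /=.
have [/imsetP[x Gx ->] | ngh] := boolP (g \in (h ^: G)%g); first by rewrite cfunJ ?mulr1.
rewrite mulr0 cfIndE // big1 ?mulr0 // => x Gx; apply: u_on.
by apply: contra ngh; rewrite class_sym -(classGidl g Gx) class_sym.
Qed.

Lemma cfuni_class_on h k : k \in (h ^: G)%g -> '1_(k ^: H)%g \in 'CF(H, h ^: G).
Proof.
move/class_eqP=> <-; apply: cfun_onS (cfuni_on H (k ^: H)%g); exact: classS.
Qed.

Lemma cfInd_cfuni_class_gt0 k : k \in H -> 0 < 'Ind[G, H] '1_(k ^: H)%g k.
Proof.
move=> kH; rewrite cfIndE //.
under eq_bigr do rewrite cfun_classE.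
by apply: weighted_count_gt0; rewrite conjg1 kH class_refl.
Qed.

Lemma cfInd_fusion_kernel h k : h \in H -> k \in H -> k \in (h ^: G)%g ->
  exists2 b : algC, 0 < b & exists a : algC,
    'Ind[G, H] (b *: '1_(h ^: H)%g - a *: '1_(k ^: H)%g) = 0.
Proof.
move=> hH kH khG; have hG := subsetP sHG h hH.
have IndkE := cfInd_on_class hG (cfuni_class_on khG).
have IndhE := cfInd_on_class hG (cfuni_class_on (class_refl G h)).
exists ('Ind[G, H] '1_(k ^: H)%g h).
  move/cfunP/(_ k): (IndkE); rewrite cfunE cfun_classE hG khG mulr1 => <-.
  exact: cfInd_cfuni_class_gt0.
exists ('Ind[G, H] '1_(h ^: H)%g h).
set a := 'Ind[G, H] _ h in IndhE *; set b := 'Ind[G, H] _ h in IndkE *.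
by rewrite linearB !linearZ /= IndhE IndkE scalerN !scalerA mulrC subrr.
Qed.

Lemma cfInd_invg (f f' : 'CF(H)) g : (forall x, f' x = f x^-1%g) ->
  'Ind[G, H] f' g = 'Ind[G, H] f g^-1%g.
Proof.
by move=> f'E; rewrite !cfIndE //; congr (_ * _); apply: eq_bigr => y _; rewrite f'E conjVg.
Qed.

End InductionAndFusion.

Lemma ratr_row_kernel_separates m p q (A : 'M[rat]_(m, p)) (B : 'M[rat]_(m, q))
    (a : 'rV[algC]_m) :
  a *m map_mx ratr A != 0 -> a *m map_mx ratr B = 0 ->
  exists2 b : 'rV[rat]_m, b *m A != 0 & b *m B = 0.
Proof.
move=> nzaA /sub_kermxP; rewrite -map_kermx => /submxP[D aE].
have nzKA : kermx B *m A != 0.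
  by apply: contraNneq nzaA => KA0; rewrite aE -mulmxA -map_mxM KA0 map_mx0 mulmx0.
have [i nzKAi] : exists i, row i (kermx B) *m A != 0.
  apply/existsP; apply: contraR nzKA; rewrite negb_exists => /forallP KAi0.
  by apply/eqP/row_matrixP => i; rewrite row_mul row0; apply/eqP/negbNE.
by exists (row i (kermx B)); rewrite // -row_mul mulmx_ker row0.
Qed.

Lemma rat_row_clear_denominators m (b : 'rV[rat]_m) :
  exists2 d : rat, d != 0 & exists c : 'I_m -> int, forall i, d * b 0 i = (c i)%:~R.
Proof.
exists (\prod_i denq (b 0 i))%:~R.
  by rewrite intr_eq0; apply/prodf_neq0 => i _; apply: denq_neq0.
exists (fun i => numq (b 0 i) * \prod_(j | j != i) denq (b 0 j)) => i.
by rewrite (bigD1 i) //= !intrM numqE; ring.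
Qed.

Section CfdotIrrMatrix.
Variables (gT : finGroupType) (K : {group gT}).

Definition cfdot_irr_mx n (phi : 'I_n -> 'CF(K)) : 'M[algC]_(n, Nirr K) :=
  \matrix_(i, j) '[phi i, 'chi_j].

(* Rounding is exact on virtual characters, whose coordinates are integers. *)
Definition cfdot_irr_ratmx n (phi : 'I_n -> 'CF(K)) : 'M[rat]_(n, Nirr K) :=
  \matrix_(i, j) (Num.floor '[phi i, 'chi_j])%:~R.

Lemma map_cfdot_irr_ratmx n (phi : 'I_n -> 'CF(K)) :
    (forall i, phi i \in 'Z[irr K]%g) ->
  map_mx ratr (cfdot_irr_ratmx phi) = cfdot_irr_mx phi.
Proof.
move=> Zphi; apply/matrixP => i j.
by rewrite !mxE ratr_int floorK // Cint_cfdot_vchar_irr.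
Qed.

Lemma cfun_combination_eq0 n (phi : 'I_n -> 'CF(K)) (w : 'rV[algC]_n) :
  (\sum_i w 0 i *: phi i == 0) = (w *m cfdot_irr_mx phi == 0).
Proof.
have cfdotE j : '[\sum_i w 0 i *: phi i, 'chi_j] = (w *m cfdot_irr_mx phi) 0 j.
  by rewrite cfdot_suml mxE; apply: eq_bigr => i _; rewrite cfdotZl mxE.
apply/eqP/eqP => [phi0 | w0]; first by apply/rowP => j; rewrite -cfdotE phi0 cfdot0l mxE.
by rewrite [LHS]cfun_sum_cfdot big1 // => j _; rewrite cfdotE w0 mxE scale0r.
Qed.

End CfdotIrrMatrix.

(* L has a rational matrix on virtual characters, so a complex kernel vector
   yields a rational, hence an integral, one. *)
Lemma linear_vchar_kernel_int (aT rT : finGroupType) (A : {group aT}) (B : {group rT})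
    (L : {linear 'CF(A) -> 'CF(B)}) n (psi : 'I_n -> 'CF(A)) (a : 'I_n -> algC) :
    (forall i, psi i \in 'Z[irr A]%g) -> (forall i, L (psi i) \in 'Z[irr B]%g) ->
    \sum_i a i *: psi i != 0 -> L (\sum_i a i *: psi i) = 0 ->
  exists2 c : 'I_n -> int, \sum_i psi i *~ c i != 0 & L (\sum_i psi i *~ c i) = 0.
Proof.
move=> Zpsi ZLpsi nz_a La0.
have Lsum (w : 'rV[algC]_n) : L (\sum_i w 0 i *: psi i) = \sum_i w 0 i *: L (psi i).
  by rewrite linear_sum; apply: eq_bigr => i _; rewrite linearZ.
have aE : \sum_i a i *: psi i = \sum_i (\row_j a j) 0 i *: psi i.
  by apply: eq_bigr => i _; rewrite mxE.
have [b nz_b Lb0] : exists2 b : 'rV[rat]_n,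
    b *m cfdot_irr_ratmx psi != 0 & b *m cfdot_irr_ratmx (fun i => L (psi i)) = 0.
  apply: (@ratr_row_kernel_separates _ _ _ _ _ (\row_j a j)).
    by rewrite map_cfdot_irr_ratmx // -cfun_combination_eq0 -aE.
  by apply/eqP; rewrite map_cfdot_irr_ratmx // -cfun_combination_eq0 -Lsum -aE La0.
have [d nz_d [c bE]] := rat_row_clear_denominators b.
have cE : \sum_i psi i *~ c i = \sum_i (map_mx ratr (d *: b)) 0 i *: psi i.
  by apply: eq_bigr => i _; rewrite !mxE bE ratr_int scaler_int.
exists c; rewrite cE.
- rewrite cfun_combination_eq0 -map_cfdot_irr_ratmx // -map_mxM map_mx_eq0.
  by rewrite -scalemxAl scalemx_eq0 negb_or nz_d.
- apply/eqP; rewrite Lsum cfun_combination_eq0 -map_cfdot_irr_ratmx // -map_mxM.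
  by rewrite map_mx_eq0 -scalemxAl Lb0 scaler0.
Qed.

(* The real 2n x 2n matrix of the R-linear map C^n -> C^n given by A. *)
Definition realify n (A : 'M[algC]_n) : 'M[algC]_(n + n) :=
  block_mx (map_mx (@Re _) A) (- map_mx (@Im _) A) (map_mx (@Im _) A) (map_mx (@Re _) A).

Lemma map_Re_mulmx n (A B : 'M[algC]_n) :
  map_mx (@Re _) (A *m B) =
    map_mx (@Re _) A *m map_mx (@Re _) B - map_mx (@Im _) A *m map_mx (@Im _) B.
Proof.
apply/matrixP => i j; rewrite !mxE raddf_sum /= -sumrB; apply: eq_bigr => k _.
by rewrite !mxE ReM.
Qed.

Lemma map_Im_mulmx n (A B : 'M[algC]_n) :
  map_mx (@Im _) (A *m B) =
    map_mx (@Re _) A *m map_mx (@Im _) B + map_mx (@Im _) A *m map_mx (@Re _) B.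
Proof.
apply/matrixP => i j; rewrite !mxE raddf_sum /= -big_split; apply: eq_bigr => k _.
by rewrite !mxE ImM [_ * 'Re _]mulrC.
Qed.

Lemma realify1 n : realify (1%:M : 'M[algC]_n) = 1%:M.
Proof.
have Re1 : map_mx (@Re _) (1%:M : 'M[algC]_n) = 1%:M.
  by apply/matrixP => i j; rewrite !mxE; case: (i == j); rewrite ?raddf0 //; apply/Creal_ReP/real1.
have Im1 : map_mx (@Im _) (1%:M : 'M[algC]_n) = 0.
  by apply/matrixP => i j; rewrite !mxE; case: (i == j); rewrite ?raddf0 //; apply/Creal_ImP/real1.
by rewrite /realify Re1 Im1 oppr0 scalar_mx_block.
Qed.

Lemma realifyM n (A B : 'M[algC]_n) : realify (A *m B) = realify A *m realify B.
Proof.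
rewrite /realify mulmx_block map_Re_mulmx map_Im_mulmx.
by congr block_mx; rewrite ?mulmxN ?mulNmx ?opprD // addrC.
Qed.

Lemma mxtrace_realify n (A : 'M[algC]_n) : \tr (realify A) = \tr A + (\tr A)^*.
Proof.
have trRe : \tr (map_mx (@Re _) A) = 'Re (\tr A).
  by rewrite /mxtrace raddf_sum; apply: eq_bigr => i _; rewrite mxE.
by rewrite mxtrace_block trRe ReE; field.
Qed.

Lemma realify_real n (A : 'M[algC]_n) i j : realify A i j \is Num.real.
Proof.
rewrite /realify -(splitK i) -(splitK j).
case: (split i) => i'; case: (split j) => j' /=;
  rewrite ?block_mxEul ?block_mxEur ?block_mxEdl ?block_mxEdr !mxE ?rpredN;
  by [apply: Creal_Re | apply: Creal_Im].
Qed.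

Section RealRepresentationGroup.
Variables (gT : finGroupType) (K : {group gT}).

Lemma mx_repr_realify n (rK : mx_representation algC K n) :
  mx_repr K (fun x => realify (rK x)).
Proof.
split=> [|x y Kx Ky]; first by rewrite repr_mx1 realify1.
by rewrite repr_mxM // realifyM.
Qed.

Lemma real_repr_char_conjC n (rK : mx_representation algC K n) :
  real_repr_char (cfRepr rK + (cfRepr rK)^*%CF).
Proof.
exists (n + n), (MxRepresentation (mx_repr_realify rK)); split=> [x _ i j|].
  exact: realify_real.
apply/cfunP => x; rewrite !cfunE /=.
by case: (x \in K); rewrite ?mulr1n ?mxtrace_realify // !mulr0n rmorph0 addr0.
Qed.

Lemma real_repr_char0 : real_repr_char (0 : 'CF(K)).
Proof.
exists 0%N, (@grepr0 algC gT K); split=> [x _ [] //|].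
by apply/cfunP => x; rewrite !cfunE mxtrace1 mul0rn.
Qed.

Lemma real_repr_charD (chi1 chi2 : 'CF(K)) :
  real_repr_char chi1 -> real_repr_char chi2 -> real_repr_char (chi1 + chi2).
Proof.
case=> n1 [r1 [real1 ->]] [n2 [r2 [real2 ->]]].
exists (n1 + n2), (dadd_grepr (Representation r1) (Representation r2)); split.
  move=> x Kx i j; rewrite /= -(splitK i) -(splitK j).
  case: (split i) => i'; case: (split j) => j' /=;
    by rewrite ?block_mxEul ?block_mxEur ?block_mxEdl ?block_mxEdr ?mxE ?rpred0 ?real1 ?real2.
apply/cfunP => x; rewrite !cfunE /=.
by case: (x \in K); rewrite ?mulr1n ?mxtrace_block // !mulr0n addr0.
Qed.

Lemma real_repr_char_invg (chi : 'CF(K)) x : real_repr_char chi -> chi x^-1%g = chi x.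
Proof.
case=> n [rK [realK ->]]; rewrite char_inv ?cfRepr_char // cfunE.
have [Kx | _] := boolP (x \in K); last by rewrite mulr0n rmorph0.
by rewrite mulr1n conj_Creal // rpred_sum // => i _; apply: realK.
Qed.

Lemma ROgrp0 : ROgrp (0 : 'CF(K)).
Proof. by exists 0, 0; split; rewrite ?subr0 //; apply: real_repr_char0. Qed.

Lemma ROgrpN phi : ROgrp phi -> ROgrp (- phi : 'CF(K)).
Proof. by case=> chi1 [chi2 [R1 R2 ->]]; exists chi2, chi1; rewrite opprB. Qed.

Lemma ROgrpD phi psi : ROgrp phi -> ROgrp psi -> ROgrp (phi + psi : 'CF(K)).
Proof.
case=> a1 [a2 [A1 A2 ->]] [b1 [b2 [B1 B2 ->]]].
by exists (a1 + b1), (a2 + b2); split; [exact: real_repr_charD.. | ring].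
Qed.

Lemma ROgrpMz phi z : ROgrp phi -> ROgrp (phi *~ z : 'CF(K)).
Proof.
move=> Rphi; have ROgrpMn n : ROgrp (phi *+ n).
  by elim: n => [|n IHn]; [rewrite mulr0n; apply: ROgrp0 | rewrite mulrS; apply: ROgrpD].
by case: z => n; rewrite ?NegzE ?mulrNz; [| apply: ROgrpN]; apply: ROgrpMn.
Qed.

Lemma ROgrp_sum I (r : seq I) (F : I -> 'CF(K)) :
  (forall i, ROgrp (F i)) -> ROgrp (\sum_(i <- r) F i).
Proof.
move=> RF; elim: r => [|i r IHr]; first by rewrite big_nil; apply: ROgrp0.
by rewrite big_cons; apply: ROgrpD.
Qed.

Lemma ROgrp_invg (phi : 'CF(K)) x : ROgrp phi -> phi x^-1%g = phi x.
Proof. by case=> chi1 [chi2 [R1 R2 ->]]; rewrite !cfunE !real_repr_char_invg. Qed.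

Lemma sum_cfdot_conjC_irrE (f : 'CF(K)) x :
  (\sum_i '[f, 'chi_i] *: ('chi_i)^*%CF) x = f x^-1%g.
Proof.
rewrite {2}[f]cfun_sum_cfdot !sum_cfunE; apply: eq_bigr => i _.
by rewrite !cfunE char_inv ?irr_char.
Qed.

End RealRepresentationGroup.

Section FusionKernel.
Variables (gT : finGroupType) (G H : {group gT}).
Hypothesis sHG : H \subset G.

Lemma cfuni_class_comb_out (h k x : gT) (b a : algC) : x \notin (k ^: H)%g ->
  (b *: '1_(h ^: H)%g - a *: '1_(k ^: H)%g : 'CF(H)) x = b * ('1_(h ^: H)%g : 'CF(H)) x.
Proof. by move=> nxk; rewrite !cfunE [in a * _]cfun_classE (negPf nxk) andbF mulr0 subr0. Qed.

Lemma cfInd_vchar_kernel_of_fusion h k :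
    h \in H -> k \in H -> k \in (h ^: G)%g -> k \notin (h ^: H)%g ->
  exists phi : 'CF(H), [/\ phi \in 'Z[irr H]%g, phi != 0 & 'Ind[G, H] phi = 0].
Proof.
move=> hH kH khG nkhH; have [b b_gt0 [a Ind_f0]] := cfInd_fusion_kernel sHG hH kH khG.
set f := _ - _ in Ind_f0.
have fh : f h = b.
  by rewrite cfuni_class_comb_out ?cfun_classE ?hH ?class_refl ?mulr1 // class_sym.
have nz_f : \sum_i '[f, 'chi_i] *: 'chi_i != 0.
  by rewrite -cfun_sum_cfdot; apply: contraTneq b_gt0 => f0; rewrite -fh f0 cfunE ltxx.
have Ind_f0' : 'Ind[G, H] (\sum_i '[f, 'chi_i] *: 'chi_i) = 0 by rewrite -cfun_sum_cfdot.
have ZInd i : 'Ind[G, H] 'chi_i \in 'Z[irr G]%g by rewrite cfInd_vchar ?irr_vchar.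
have [c nz_c Ind_c0] := linear_vchar_kernel_int (@irr_vchar _ H) ZInd nz_f Ind_f0'.
exists (\sum_i 'chi_i *~ c i); split=> //.
by rewrite rpred_sum // => i _; rewrite rpredMz ?irr_vchar.
Qed.

Lemma cfInd_ROgrp_kernel_of_fusion h k :
    h \in H -> k \in H -> k \in (h ^: G)%g ->
    k \notin (h ^: H)%g -> k \notin (h^-1 ^: H)%g ->
  exists phi : 'CF(H), [/\ ROgrp phi, phi != 0 & 'Ind[G, H] phi = 0].
Proof.
move=> hH kH khG nkhH nkhiH.
have [b b_gt0 [a Ind_f0]] := cfInd_fusion_kernel sHG hH kH khG.
set f := _ - _ in Ind_f0.
have fh : f h = b.
  by rewrite cfuni_class_comb_out ?cfun_classE ?hH ?class_refl ?mulr1 // class_sym.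
have fhV_ge0 : 0 <= f h^-1%g.
  by rewrite cfuni_class_comb_out ?mulr_ge0 ?(ltW b_gt0) ?cfun_classE ?ler0n // class_sym.
pose psi i := 'chi[H]_i + ('chi_i)^*%CF.
have fsymE : \sum_i '[f, 'chi_i] *: psi i = f + \sum_i '[f, 'chi_i] *: ('chi_i)^*%CF.
  by rewrite {2}[f]cfun_sum_cfdot -big_split; apply: eq_bigr => i _; rewrite scalerDr.
have nz_fsym : \sum_i '[f, 'chi_i] *: psi i != 0.
  apply: contraTneq (ltr_wpDr fhV_ge0 b_gt0) => /cfunP/(_ h).
  by rewrite fsymE cfunE sum_cfdot_conjC_irrE fh => ->; rewrite cfunE ltxx.
have Ind_fsym0 : 'Ind[G, H] (\sum_i '[f, 'chi_i] *: psi i) = 0.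
  rewrite fsymE linearD /= Ind_f0 add0r; apply/cfunP => g.
  by rewrite (cfInd_invg sHG _ (sum_cfdot_conjC_irrE f)) Ind_f0 !cfunE.
have Zpsi i : psi i \in 'Z[irr H]%g.
  by rewrite /psi -conjC_IirrE rpredD ?irr_vchar.
have [|c nz_c Ind_c0] := linear_vchar_kernel_int (L := 'Ind[G, H]) Zpsi _ nz_fsym Ind_fsym0.
  by move=> i; apply: cfInd_vchar.
exists (\sum_i psi i *~ c i); split=> //.
apply: ROgrp_sum => i; apply: ROgrpMz.
exists (psi i), 0; split; rewrite ?subr0 //; last exact: real_repr_char0.
by rewrite /psi -irrRepr; apply: real_repr_char_conjC.
Qed.

End FusionKernel.

Section InductionInjectivity.
Variables (gT : finGroupType) (G H : {group gT}).
Hypothesis sHG : H \subset G.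

Lemma class_sub_classGI h : h \in H -> (h ^: H \subset (h ^: G) :&: H)%g.
Proof. by move=> hH; rewrite subsetI classS // class_subG. Qed.

Lemma cfInd_inj_of_classGI_eq :
  (forall h, h \in H -> ((h ^: G) :&: H = h ^: H)%g) -> injective ('Ind[G, H]).
Proof.
move=> fusion_free phi psi.
apply: (cfInd_inj_fusion_invariant sHG (P := fun _ => True)) => // {}phi h x _ hH Gx hxH.
have : (h ^ x)%g \in ((h ^: G) :&: H)%g by rewrite inE memJ_class.
by rewrite fusion_free // => /imsetP[y Hy ->]; rewrite cfunJ.
Qed.

Lemma classGI_eq_of_cfInd_inj_vchar :
    (forall phi psi : 'CF(H), Rgrp phi -> Rgrp psi ->
       'Ind[G, H] phi = 'Ind[G, H] psi -> phi = psi) ->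
  forall h, h \in H -> ((h ^: G) :&: H = h ^: H)%g.
Proof.
move=> Ind_inj h hH; apply/eqP; rewrite eqEsubset class_sub_classGI // andbT.
apply/subsetP => k /setIP[khG kH]; apply: contraT => nkhH.
have [phi [Zphi nz_phi Ind_phi0]] := cfInd_vchar_kernel_of_fusion sHG hH kH khG nkhH.
have phi0 : phi = 0 by apply: Ind_inj; rewrite /Rgrp ?rpred0 ?linear0.
by rewrite phi0 eqxx in nz_phi.
Qed.

Lemma cfInd_inj_ROgrp_of_real_classGI_eq :
    (forall h, h \in H -> ((h ^: G :|: h^-1 ^: G) :&: H = h ^: H :|: h^-1 ^: H)%g) ->
  forall phi psi : 'CF(H), ROgrp phi -> ROgrp psi ->
    'Ind[G, H] phi = 'Ind[G, H] psi -> phi = psi.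
Proof.
move=> real_fusion_free; apply: (cfInd_inj_fusion_invariant sHG) => phi h x Rphi hH Gx hxH.
have : (h ^ x)%g \in ((h ^: G :|: h^-1 ^: G) :&: H)%g by rewrite inE hxH inE memJ_class.
rewrite real_fusion_free // inE => /orP[] /imsetP[y Hy ->]; rewrite cfunJ //.
exact: ROgrp_invg.
Qed.

Lemma real_classGI_eq_of_cfInd_inj_ROgrp :
    (forall phi psi : 'CF(H), ROgrp phi -> ROgrp psi ->
       'Ind[G, H] phi = 'Ind[G, H] psi -> phi = psi) ->
  forall h, h \in H -> ((h ^: G :|: h^-1 ^: G) :&: H = h ^: H :|: h^-1 ^: H)%g.
Proof.
move=> Ind_inj h hH; have hVH : (h^-1)%g \in H by rewrite groupV.
apply/eqP; rewrite eqEsubset {2}setIUl setUSS ?class_sub_classGI // andbT.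
apply/subsetP => k /setIP[khG kH]; apply: contraT; rewrite inE negb_or => /andP[nkhH nkhVH].
have [phi [Rphi nz_phi Ind_phi0]] : exists phi : 'CF(H),
    [/\ ROgrp phi, phi != 0 & 'Ind[G, H] phi = 0].
  case/setUP: khG => [khG | khVG].
    by have := cfInd_ROgrp_kernel_of_fusion sHG hH kH khG nkhH nkhVH.
  by have := cfInd_ROgrp_kernel_of_fusion sHG hVH kH khVG nkhVH; rewrite invgK => /(_ nkhH).
have phi0 : phi = 0 by apply: Ind_inj; rewrite ?linear0 //; apply: ROgrp0.
by rewrite phi0 eqxx in nz_phi.
Qed.

End InductionInjectivity.

Theorem theoremA (gT : finGroupType) (G H : {group gT}) (sHG : H \subset G) :
  ((forall phi psi : 'CF(H), Rgrp phi -> Rgrp psi ->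
      'Ind[G, H] phi = 'Ind[G, H] psi -> phi = psi)
   <-> (forall h, h \in H -> ((h ^: G) :&: H = h ^: H)%g))
  /\
  ((forall phi psi : 'CF(H), ROgrp phi -> ROgrp psi ->
      'Ind[G, H] phi = 'Ind[G, H] psi -> phi = psi)
   <-> (forall h, h \in H ->
          (((h ^: G) :|: (h^-1 ^: G)) :&: H = (h ^: H) :|: (h^-1 ^: H))%g)).
Proof.
split; split.
- exact: classGI_eq_of_cfInd_inj_vchar.
- by move=> fusion_free phi psi _ _; apply: cfInd_inj_of_classGI_eq.
- exact: real_classGI_eq_of_cfInd_inj_ROgrp.
- exact: cfInd_inj_ROgrp_of_real_classGI_eq.
Qed.
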